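(* Fix $\eta>0$ and $K\ge1$, and let $N=\sum_{j\in V}|N_j|$. Let $\hat\lambda$ be the output of the randomized message passing procedure run for $K$ iterations with the SMP update, where the vertex $i$ is sampled with probability $p_i=|N_i|/N$. Then $$\mathbb{E}\sum_{e\in E,i\in e}\|S^{\hat\lambda}_{e,i}-\mu^{\hat\lambda}_i\|_1^2\le\frac{8N\eta\,(L(0)-\inf_\lambda L(\lambda))}{K}.$$
   Context: Let $G=(V,E)$ be a finite undirected graph with $n=|V|$, $m=|E|$, every vertex incident to at least one edge; $N_i=\{e\in E:i\in e\}$. $\chi$ is a finite label set with $d=|\chi|\ge2$. Costs $C_i\in\mathbb{R}^\chi$, $C_e\in\mathbb{R}^{\chi^2}$; for $e=\{i,j\}$, $x_e=(x_i,x_j)$, $(x_e)_i=x_i$. Dual variables $\lambda=(\lambda_{e,i}(x))\in\mathbb{R}^{2md}$ and $$L(\lambda)=\frac1\eta\sum_{i\in V}\log\sum_{x\in\chi}\exp\Big(-\eta C_i(x)+\eta\sum_{e\in N_i}\lambda_{e,i}(x)\Big)+\frac1\eta\sum_{e\in E}\log\sum_{x_e\in\chi^2}\exp\Big(-\eta C_e(x_e)-\eta\sum_{i\in e}\lambda_{e,i}((x_e)_i)\Big).$$ $\mu^\lambda_i$, $\mu^\lambda_e$ are the normalized distributions proportional to the exponentials inside the two sums; $S^\lambda_{e,i}(x)=\sum_{x_e:(x_e)_i=x}\mu^\lambda_e(x_e)$; slack $\nu^\lambda_{e,i}=S^\lambda_{e,i}-\mu^\lambda_i$. SMP update at vertex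 $i$: for each $e\in N_i$ replace $\lambda_{e,i}(x)$ by $\lambda_{e,i}(x)+\frac1\eta\log S^\lambda_{e,i}(x)-\frac{1}{\eta(|N_i|+1)}\log(\mu^\lambda_i(x)\prod_{e'\in N_i}S^\lambda_{e',i}(x))$, other coordinates unchanged. Randomized message passing procedure: $\lambda^{(0)}=0$; for $k=0,\dots,K-1$, sample a vertex $i_k$ independently from the given distribution and let $\lambda^{(k+1)}$ be $\lambda^{(k)}$ updated at vertex $i_k$ by the update rule evaluated at $\lambda^{(k)}$; output $\hat\lambda\in\arg\min_{\lambda\in\{\lambda^{(0)},\dots,\lambda^{(K)}\}}\sum_{e\in E,i\in e}\|\nu^\lambda_{e,i}\|_1^2$. *)

From HB Require Import structures.
From mathcomp Require Import all_boot all_order all_algebra.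
From mathcomp Require Import all_classical all_reals all_analysis.
Set Implicit Arguments. Unset Strict Implicit. Unset Printing Implicit Defensive.
Import Order.TTheory GRing.Theory Num.Theory.
Local Open Scope ring_scope.

(* Graph encoding: V a finite vertex type, E : {set V * V} a set of ordered
   pairs (i,j) with i != j and (j,i) \notin E; the ordered pair e = (i,j)
   represents the undirected edge {i,j} and fixes the order x_e = (x_i, x_j).  Dual variables lam e i x  (only coordinates with
   e \in E, i \in e matter). *)

Section SMP.
Variables (R : realType) (V X : finType) (E : {set V * V}).
Variables (Cv : V -> X -> R) (Ce : V * V -> X * X -> R) (eta : R).

Definition dual := V * V -> V -> X -> R.

Definition in_edge (e : V * V) (i : V) : bool := (e.1 == i) || (e.2 == i).

Definition Nb (i : V) : {set V * V} := [set e in E | in_edge e i].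
Definition deg (i : V) : nat := #|Nb i|.

Definition proj (e : V * V) (xe : X * X) (i : V) : X :=
  if i == e.1 then xe.1 else xe.2.

Definition wv (lam : dual) (i : V) (x : X) : R :=
  expR (- eta * Cv i x + eta * \sum_(e in Nb i) lam e i x).
Definition we (lam : dual) (e : V * V) (xe : X * X) : R :=
  expR (- eta * Ce e xe - eta * \sum_(i | in_edge e i) lam e i (proj e xe i)).

Definition L (lam : dual) : R :=
  eta^-1 * \sum_(i : V) ln (\sum_(x : X) wv lam i x)
  + eta^-1 * \sum_(e in E) ln (\sum_(xe : X * X) we lam e xe).

Definition mu_v (lam : dual) (i : V) (x : X) : R :=
  wv lam i x / \sum_(y : X) wv lam i y.
Definition mu_e (lam : dual) (e : V * V) (xe : X * X) : R :=
  we lam e xe / \sum_(ye : X * X) we lam e ye.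

Definition S (lam : dual) (e : V * V) (i : V) (x : X) : R :=
  \sum_(xe : X * X | proj e xe i == x) mu_e lam e xe.

Definition slack (lam : dual) (e : V * V) (i : V) (x : X) : R :=
  S lam e i x - mu_v lam i x.

Definition obj (lam : dual) : R :=
  \sum_(e in E) \sum_(i | in_edge e i) (\sum_(x : X) `|slack lam e i x|) ^+ 2.

Definition smp_update (lam : dual) (i : V) : dual :=
  fun e j x =>
    if (j == i) && (e \in Nb i) then
      lam e j x + eta^-1 * ln (S lam e i x)
      - (eta * (deg i).+1%:R)^-1
          * ln (mu_v lam i x * \prod_(e' in Nb i) S lam e' i x)
    else lam e j x.

Definition lam0 : dual := fun _ _ _ => 0.

Definition iterate (K : nat) (s : K.-tuple V) (k : nat) : dual :=
  foldl smp_update lam0 (take k s).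

Definition output (K : nat) (s : K.-tuple V) : dual :=
  iterate s (Order.arg_min (ord0 : 'I_K.+1) xpredT (fun k : 'I_K.+1 => obj (iterate s k))).

Definition expected_output_obj (K : nat) (p : V -> R) : R :=
  \sum_(s : K.-tuple V) (\prod_(k < K) p (tnth s k)) * obj (output s).

End SMP.

From Pilot Require Import Defs.
From HB Require Import structures.
From mathcomp Require Import all_boot all_order all_algebra.
From mathcomp Require Import all_classical all_reals all_analysis.
From mathcomp Require Import ring lra.
Import Order.TTheory GRing.Theory Num.Theory.
Local Open Scope ring_scope.

(* Fix a vertex i and put n_i = |N_i| + 1.  The SMP update at i moves mu_i
   and the marginals S_{e,i} (e in N_i) to their pointwise geometric mean
   G_i(x) (suitably normalized), and a direct computation shows
       L(upd lam i) = L(lam) + (n_i / eta) ln (sum_x G_i(x))          [L_upd].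
   Comparing square roots (a Hellinger-type bound) and using AM-GM for them,
       sum_{e in N_i} |S_{e,i} - mu_i|_1^2 <= 4 n_i^2 (1 - sum_x G_i(x)),
   so by ln y <= y - 1 one update pays for the slack at i:
       sum_{e in N_i} |nu_{e,i}|_1^2 <= 4 eta n_i (L(lam) - L(upd lam i)).
   As n_i <= 2 |N_i|, averaging with p_i = |N_i| / N gives
       obj(lam) <= 8 N eta (L(lam) - E_i L(upd lam i)).
   A generic expected-descent lemma for i.i.d. random steps telescopes this
   along the K iterations; the best iterate is no worse than their average,
   and E L(lam^(K)) >= inf L since L is bounded below. *)

Set Implicit Arguments.
Unset Strict Implicit.
Unset Printing Implicit Defensive.

Section RealInequalities.
Variable R : realType.

Lemma ln_le_subr1 (y : R) : 0 < y -> ln y <= y - 1.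
Proof.
by move=> y_gt0; have := @le_ln1Dx R (y - 1); rewrite [1 + _]addrC subrK; apply; lra.
Qed.

Lemma sum_gt0 (I : finType) (i0 : I) (F : I -> R) :
  (forall i, 0 < F i) -> 0 < \sum_i F i.
Proof.
move=> F_gt0; apply: (lt_le_trans (F_gt0 i0)).
by rewrite (bigD1 i0) //= lerDl sumr_ge0 // => i _; exact: ltW.
Qed.

Lemma ln_sqrtr (y : R) : 0 < y -> ln (Num.sqrt y) = ln y / 2.
Proof.
move=> y_gt0; have s_gt0 : 0 < Num.sqrt y by rewrite sqrtr_gt0.
by rewrite -{2}(sqr_sqrtr (ltW y_gt0)) lnXn // -[_ *+ 2]mulr_natr mulfK.
Qed.

(* Cauchy-Schwarz against the constant vector: (sum f)^2 <= #|A| sum f^2. *)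
Lemma sqr_sum_le (T : finType) (A : {set T}) (f : T -> R) :
  (\sum_(e in A) f e) ^+ 2 <= #|A|%:R * \sum_(e in A) f e ^+ 2.
Proof.
set P := \sum_(e in A) f e; set Q := \sum_(e in A) _; set d : R := #|A|%:R.
have dev : \sum_(e in A) (d * f e - P) ^+ 2 = d * (d * Q - P ^+ 2).
  under eq_bigr => e _ do rewrite sqrrB exprMn.
  rewrite big_split sumrB /= sumr_const -mulr_sumr -/Q sumrMnl -mulr_suml.
  by rewrite -mulr_sumr -/P -(mulr_natr _ #|A|) -/d -(mulr_natr _ 2); ring.
have dev_ge0 : 0 <= d * (d * Q - P ^+ 2).
  by rewrite -dev sumr_ge0 // => e _; exact: sqr_ge0.
have [A0|A_gt0] := posnP #|A|.
  have -> : P = 0 by rewrite /P big_pred0 // => e; rewrite (card0_eq A0).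
  by rewrite expr0n /= mulr_ge0 ?ler0n // sumr_ge0 // => e _; exact: sqr_ge0.
by rewrite -subr_ge0 -(pmulr_rge0 _ (_ : 0 < d)) // ltr0n.
Qed.

(* The spread of u around a centre u0, bounded by the empirical variance of
   the family (u0, u_e)_{e in A}. *)
Lemma sum_sqr_dev_le (I : finType) (A : {set I}) (u0 : R) (u : I -> R) :
  \sum_(e in A) (u e - u0) ^+ 2 <=
  (#|A|.+1)%:R * (u0 ^+ 2 + \sum_(e in A) u e ^+ 2) - (u0 + \sum_(e in A) u e) ^+ 2.
Proof.
have cs := sqr_sum_le A u.
under eq_bigr => e _ do rewrite sqrrB.
rewrite big_split /= sumrB sumr_const sumrMnl -mulr_suml -natr1.
set P := \sum_(e in A) u e in cs *; set Q := \sum_(e in A) u e ^+ 2 in cs *.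
set d : R := #|A|%:R in cs *.
rewrite -(mulr_natr (u0 ^+ 2) #|A|) -/d -(mulr_natr _ 2); lra.
Qed.

(* For nonnegative unit vectors u, v in l2, the l1 distance of their squares
   is controlled by their l2 distance: by Cauchy-Schwarz,
   sum |u^2 - v^2| = sum |u - v| (u + v) <= |u - v|_2 |u + v|_2 <= 2 |u - v|_2. *)
Lemma l1_sqr_le_l2_dist (X : finType) (u v : X -> R) :
  (forall x, 0 <= u x) -> (forall x, 0 <= v x) ->
  \sum_x u x ^+ 2 = 1 -> \sum_x v x ^+ 2 = 1 ->
  (\sum_x `|u x ^+ 2 - v x ^+ 2|) ^+ 2 <= 4 * \sum_x (u x - v x) ^+ 2.
Proof.
move=> u_ge0 v_ge0 u_unit v_unit.
set D := \sum_x _; set H := \sum_x _.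
(* pointwise AM-GM with a free weight s, summed and then evaluated at s = D *)
have weighted : forall s, 8 * s * D <= 16 * H + 4 * s ^+ 2.
  move=> s; have -> : 4 * s ^+ 2 = \sum_x 2 * s ^+ 2 * (u x ^+ 2 + v x ^+ 2).
    by rewrite -mulr_sumr big_split /= u_unit v_unit; lra.
  rewrite /D /H !mulr_sumr -big_split /=; apply: ler_sum => x _.
  have uv_ge0 : 0 <= u x + v x by rewrite addr_ge0.
  rewrite subr_sqr normrM [`|u x + v x|]ger0_norm //.
  rewrite -(real_normK (num_real (u x - v x))).
  have := normr_ge0 (u x - v x); set w := `|_|; move=> w_ge0.
  have := sqr_ge0 (4 * w - s * (u x + v x)).
  have := sqr_ge0 (s * (u x - v x)); nra.
by have := weighted D; rewrite -mulrA -expr2; lra.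
Qed.

Definition geomean (I : finType) (A : {set I}) (b0 : R) (b : I -> R) : R :=
  expR ((ln b0 + \sum_(e in A) ln (b e)) / (#|A|.+1)%:R).

Lemma geomean_gt0 (I : finType) (A : {set I}) b0 (b : I -> R) : 0 < geomean A b0 b.
Proof. exact: expR_gt0. Qed.

Lemma ln_sqrtr_sub_le (b m : R) : 0 < b -> 0 < m ->
  ln b / 2 - ln m <= Num.sqrt b / m - 1.
Proof.
move=> b_gt0 m_gt0; rewrite -ln_sqrtr // -ln_div ?posrE ?sqrtr_gt0 //.
by apply: ln_le_subr1; rewrite divr_gt0 ?sqrtr_gt0.
Qed.

Lemma geomean_le_sqrt_mean (I : finType) (A : {set I}) (b0 : R) (b : I -> R) :
  0 < b0 -> (forall e, 0 < b e) ->
  (#|A|.+1)%:R ^+ 2 * geomean A b0 b <=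
  (Num.sqrt b0 + \sum_(e in A) Num.sqrt (b e)) ^+ 2.
Proof.
move=> b0_gt0 b_gt0; set n : R := (#|A|.+1)%:R; set d : R := #|A|%:R.
have nE : n = d + 1 by rewrite /n /d natr1.
have n_gt0 : 0 < n by rewrite ltr0n.
set T := Num.sqrt b0 + _.
have T_gt0 : 0 < T.
  by rewrite ltr_pwDl ?sqrtr_gt0 ?sumr_ge0 // => e _; exact: sqrtr_ge0.
set m := T / n; have m_gt0 : 0 < m by rewrite divr_gt0.
have mean : Num.sqrt b0 / m + (\sum_(e in A) Num.sqrt (b e)) / m = d + 1.
  by rewrite -mulrDl -/T /m -nE; field; rewrite !lt0r_neq0.
have head := ln_sqrtr_sub_le b0_gt0 m_gt0.
have tail : \sum_(e in A) (ln (b e) / 2 - ln m) <=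
            \sum_(e in A) (Num.sqrt (b e) / m - 1).
  by apply: ler_sum => e _; apply: ln_sqrtr_sub_le.
rewrite !sumrB !sumr_const -!mulr_suml -(mulr_natr (ln m)) -/d in tail.
have mean_ln : (ln b0 + \sum_(e in A) ln (b e)) / n <= ln m + ln m.
  by rewrite ler_pdivrMr // nE; lra.
have : geomean A b0 b <= m ^+ 2.
  by rewrite expr2 -[m]lnK ?posrE // -expRD ler_expR.
rewrite -(ler_pM2l (exprn_gt0 2 n_gt0)) => /le_trans; apply.
by rewrite -exprMn /m mulrC divfK ?lt0r_neq0.
Qed.

Lemma sum_sqrt_dev_le (I : finType) (A : {set I}) (b0 : R) (b : I -> R) :
  0 < b0 -> (forall e, 0 < b e) ->
  \sum_(e in A) (Num.sqrt (b e) - Num.sqrt b0) ^+ 2 <=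
  (#|A|.+1)%:R * (b0 + \sum_(e in A) b e) - (#|A|.+1)%:R ^+ 2 * geomean A b0 b.
Proof.
move=> b0_gt0 b_gt0.
apply: (le_trans (sum_sqr_dev_le A (Num.sqrt b0) (fun e => Num.sqrt (b e)))).
rewrite sqr_sqrtr ?(ltW b0_gt0) //.
under eq_bigr => e _ do rewrite sqr_sqrtr ?(ltW (b_gt0 e)) //.
by rewrite lerD2l lerN2 geomean_le_sqrt_mean.
Qed.

Lemma sum_l1_dev_le (X I : finType) (A : {set I}) (a0 : X -> R) (a : I -> X -> R) :
  (forall x, 0 < a0 x) -> (forall e x, 0 < a e x) -> \sum_x a0 x = 1 ->
  (forall e, e \in A -> \sum_x a e x = 1) ->
  \sum_(e in A) (\sum_x `|a e x - a0 x|) ^+ 2 <=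
  4 * (#|A|.+1)%:R ^+ 2 * (1 - \sum_x geomean A (a0 x) (a^~ x)).
Proof.
move=> a0_gt0 a_gt0 a0_sum a_sum; set n : R := (#|A|.+1)%:R.
have sqrt_unit (c : X -> R) : (forall x, 0 < c x) -> \sum_x c x = 1 ->
    \sum_x Num.sqrt (c x) ^+ 2 = 1.
  by move=> c_gt0 <-; apply: eq_bigr => x _; rewrite sqr_sqrtr ?(ltW (c_gt0 x)).
have hellinger : forall e, e \in A -> (\sum_x `|a e x - a0 x|) ^+ 2 <=
    4 * \sum_x (Num.sqrt (a e x) - Num.sqrt (a0 x)) ^+ 2.
  move=> e eA; have := l1_sqr_le_l2_dist (fun x => sqrtr_ge0 (a e x))
    (fun x => sqrtr_ge0 (a0 x)) (sqrt_unit _ (a_gt0 e) (a_sum e eA))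
    (sqrt_unit _ a0_gt0 a0_sum).
  by under eq_bigr => x _ do rewrite !sqr_sqrtr ?(ltW (a_gt0 e x)) ?(ltW (a0_gt0 x)) //.
apply: (le_trans (ler_sum _ hellinger)); rewrite -mulr_sumr exchange_big /=.
apply: (@le_trans _ _ (4 * \sum_x
    (n * (a0 x + \sum_(e in A) a e x) - n ^+ 2 * geomean A (a0 x) (a^~ x)))).
  by rewrite ler_pM2l // ler_sum // => x _; apply: sum_sqrt_dev_le.
rewrite sumrB -mulr_sumr big_split /= a0_sum exchange_big /=.
rewrite (eq_bigr (fun _ => 1)) ?sumr_const; last by move=> e eA; rewrite a_sum.
have nE : n = #|A|%:R + 1 by rewrite natr1.
rewrite -mulr_sumr [X in X <= _](_ : _ = 4 * n ^+ 2 *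
  (1 - \sum_x geomean A (a0 x) (a^~ x))) //.
by rewrite nE; ring.
Qed.

End RealInequalities.

Lemma arg_min_le_mean (R : realType) (K : nat) (f : nat -> R) : (0 < K)%N ->
  f (Order.arg_min (ord0 : 'I_K.+1) xpredT (fun k : 'I_K.+1 => f k)) <=
  K%:R^-1 * \sum_(k < K) f k.
Proof.
move=> K_gt0; case: arg_minP => // k0 _ k0_min.
have K_gt0' : 0 < K%:R :> R by rewrite ltr0n.
rewrite -(ler_pM2l K_gt0') mulrA mulfV ?mul1r ?lt0r_neq0 //.
rewrite mulr_natl -[in X in _ *+ X](card_ord K) -sumr_const.
apply: ler_sum => k _; have := k0_min (inord k) isT.
by rewrite inordK // ltnS ltnW.
Qed.

Section RandomDescent.
Variables (R : realType) (I : finType) (p : I -> R).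
Hypotheses (p_ge0 : forall i, 0 <= p i) (p_sum1 : \sum_i p i = 1).

Definition seq_weight (m : nat) (s : m.-tuple I) : R := \prod_(k < m) p (tnth s k).

Lemma sum_tuple_cons (m : nat) (F : m.+1.-tuple I -> R) :
  \sum_s F s = \sum_i \sum_(t : m.-tuple I) F [tuple of i :: t].
Proof.
rewrite pair_big /= (reindex (fun q : I * m.-tuple I => [tuple of q.1 :: q.2])) //.
exists (fun s : m.+1.-tuple I => (thead s, behead_tuple s)).
  by move=> [i t] _; rewrite /= theadE; congr pair; apply: val_inj.
by move=> s _; case/tupleP: s => i t; apply: val_inj; rewrite /= theadE.
Qed.

Lemma seq_weight_cons (m : nat) (i : I) (t : m.-tuple I) :
  seq_weight [tuple of i :: t] = p i * seq_weight t.
Proof.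
rewrite /seq_weight big_ord_recl tnth0; congr (_ * _).
by apply: eq_bigr => k _; rewrite tnthS.
Qed.

Lemma seq_weight_ge0 (m : nat) (s : m.-tuple I) : 0 <= seq_weight s.
Proof. by rewrite prodr_ge0. Qed.

Lemma seq_weight_sum (m : nat) : \sum_(s : m.-tuple I) seq_weight s = 1.
Proof.
elim: m => [|m IH].
  rewrite (eq_bigr (fun _ => 1)) => [|s _]; last by rewrite /seq_weight big_ord0.
  by rewrite sumr_const card_tuple expn0.
rewrite sum_tuple_cons -[RHS]p_sum1; apply: eq_bigr => i _.
by under eq_bigr => t _ do rewrite seq_weight_cons; rewrite -mulr_sumr IH mulr1.
Qed.

Variables (T : Type) (step : T -> I -> T) (Psi Phi : T -> R) (c : R).
Hypothesis descent : forall t, Psi t <= c * (Phi t - \sum_i p i * Phi (step t i)).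

Lemma expected_descent (m : nat) (t0 : T) :
  \sum_(s : m.-tuple I) seq_weight s * \sum_(k < m) Psi (foldl step t0 (take k s)) <=
  c * (Phi t0 - \sum_(s : m.-tuple I) seq_weight s * Phi (foldl step t0 s)).
Proof.
elim: m t0 => [|m IH] t0.
  rewrite big1 => [|s _]; last by rewrite big_ord0 mulr0.
  rewrite (eq_bigr (fun s => seq_weight s * Phi t0)) => [|s]; last by rewrite tuple0.
  by rewrite -mulr_suml seq_weight_sum mul1r subrr mulr0.
set rest := fun i => \sum_(t : m.-tuple I) seq_weight t * Phi (foldl step (step t0 i) t).
have first_step : \sum_(s : m.+1.-tuple I) seq_weight s *
      \sum_(k < m.+1) Psi (foldl step t0 (take k s)) =
    Psi t0 + \sum_i p i * \sum_(t : m.-tuple I) seq_weight t *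
      \sum_(k < m) Psi (foldl step (step t0 i) (take k t)).
  rewrite sum_tuple_cons -[Psi t0]mul1r -p_sum1 mulr_suml -big_split /=.
  apply: eq_bigr => i _; rewrite -mulrDr -[Psi t0]mul1r -(seq_weight_sum m).
  rewrite mulr_suml -big_split mulr_sumr /=; apply: eq_bigr => t _.
  by rewrite seq_weight_cons big_ord_recl /=; ring.
have last_step : \sum_(s : m.+1.-tuple I) seq_weight s * Phi (foldl step t0 s) =
    \sum_i p i * rest i.
  rewrite sum_tuple_cons; apply: eq_bigr => i _; rewrite mulr_sumr.
  by apply: eq_bigr => t _; rewrite seq_weight_cons -mulrA.
rewrite first_step last_step.
have IHp : \sum_i p i * \sum_(t : m.-tuple I) seq_weight t *
      \sum_(k < m) Psi (foldl step (step t0 i) (take k t)) <=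
    \sum_i p i * (c * (Phi (step t0 i) - rest i)).
  by apply: ler_sum => i _; rewrite ler_wpM2l.
have split_rhs : \sum_i p i * (c * (Phi (step t0 i) - rest i)) =
    c * \sum_i p i * Phi (step t0 i) - c * \sum_i p i * rest i.
  by rewrite !mulr_sumr -sumrB; apply: eq_bigr => i _; ring.
by move: IHp (descent t0); rewrite split_rhs; lra.
Qed.

End RandomDescent.

Section SMPDescent.
Variables (R : realType) (V X : finType) (E : {set V * V}).
Variables (Cv : V -> X -> R) (Ce : V * V -> X * X -> R) (eta : R).
Hypothesis eta_gt0 : 0 < eta.
Variable x0 : X.

Local Notation wv := (wv E Cv eta).
Local Notation we := (we Ce eta).
Local Notation mu_v := (mu_v E Cv eta).
Local Notation mu_e := (mu_e Ce eta).
Local Notation S := (Defs.S Ce eta).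
Local Notation Nb := (Nb E).
Local Notation deg := (deg E).
Local Notation L := (L E Cv Ce eta).
Local Notation upd := (smp_update E Cv Ce eta).
Local Notation slack := (slack E Cv Ce eta).
Local Notation obj := (obj E Cv Ce eta).

Lemma eta_neq0 : eta != 0. Proof. exact: lt0r_neq0. Qed.

Lemma Zv_gt0 lam i : 0 < \sum_x wv lam i x.
Proof. by apply: (sum_gt0 x0) => x; exact: expR_gt0. Qed.

Lemma Ze_gt0 lam e : 0 < \sum_xe we lam e xe.
Proof. by apply: (sum_gt0 (x0, x0)) => xe; exact: expR_gt0. Qed.

Lemma mu_v_gt0 lam i x : 0 < mu_v lam i x.
Proof. by rewrite divr_gt0 ?expR_gt0 ?Zv_gt0. Qed.

Lemma mu_e_gt0 lam e xe : 0 < mu_e lam e xe.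
Proof. by rewrite divr_gt0 ?expR_gt0 ?Ze_gt0. Qed.

Lemma mu_v_sum lam i : \sum_x mu_v lam i x = 1.
Proof. by rewrite -mulr_suml divff // lt0r_neq0 // Zv_gt0. Qed.

Lemma mu_e_sum lam e : \sum_xe mu_e lam e xe = 1.
Proof. by rewrite -mulr_suml divff // lt0r_neq0 // Ze_gt0. Qed.

Lemma proj_diag (e : V * V) (x : X) i : Defs.proj e (x, x) i = x.
Proof. by rewrite /Defs.proj; case: ifP. Qed.

Lemma S_gt0 lam e i x : 0 < S lam e i x.
Proof.
rewrite /Defs.S (bigD1 (x, x)) ?proj_diag //=.
by rewrite ltr_pwDl ?mu_e_gt0 // sumr_ge0 // => xe _; exact: ltW (mu_e_gt0 _ _ _).
Qed.

Lemma S_sum lam e i : \sum_x S lam e i x = 1.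
Proof. by rewrite -(mu_e_sum lam e) (partition_big (fun xe => Defs.proj e xe i) xpredT). Qed.

Lemma sum_incidences (F : V * V -> V -> R) :
  \sum_(e in E) \sum_(i | in_edge e i) F e i = \sum_i \sum_(e in Nb i) F e i.
Proof.
rewrite (exchange_big_dep xpredT) //=; apply: eq_bigr => i _.
by apply: eq_bigl => e; rewrite inE.
Qed.

Lemma obj_by_vertex lam :
  obj lam = \sum_i \sum_(e in Nb i) (\sum_x `|slack lam e i x|) ^+ 2.
Proof. exact: (sum_incidences (fun e i => (\sum_x `|slack lam e i x|) ^+ 2)). Qed.

(* The geometric mean of mu_i(x) and the marginals S_{e,i}(x), e in N_i; the
   SMP update at i moves all of them to this common value (up to scaling). *)
Definition smp_mean lam i x : R := geomean (Nb i) (mu_v lam i x) (fun e => S lam e i x).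

Lemma smp_mean_sum_gt0 lam i : 0 < \sum_x smp_mean lam i x.
Proof. by apply: (sum_gt0 x0) => x; exact: geomean_gt0. Qed.

Lemma ln_mu_prodS lam i x :
  ln (mu_v lam i x * \prod_(e in Nb i) S lam e i x) =
  ln (mu_v lam i x) + \sum_(e in Nb i) ln (S lam e i x).
Proof.
have -> : \prod_(e in Nb i) S lam e i x = expR (\sum_(e in Nb i) ln (S lam e i x)).
  by rewrite expR_sum; apply: eq_bigr => e _; rewrite lnK // posrE S_gt0.
by rewrite lnM ?posrE ?mu_v_gt0 ?expR_gt0 // expRK.
Qed.

Lemma wv_upd_other lam i j x : j != i -> wv (upd lam i) j x = wv lam j x.
Proof.
move=> ji; rewrite /Defs.wv; congr (expR (_ + _ * _)).
by apply: eq_bigr => e _; rewrite /smp_update (negbTE ji).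
Qed.

Lemma wv_upd_self lam i x :
  wv (upd lam i) i x = (\sum_y wv lam i y) * smp_mean lam i x.
Proof.
set n : R := (#|Nb i|.+1)%:R; set d : R := #|Nb i|%:R.
have nE : n = d + 1 by rewrite /n /d natr1.
have upd_sum : \sum_(e in Nb i) upd lam i e i x =
    \sum_(e in Nb i) lam e i x + eta^-1 * \sum_(e in Nb i) ln (S lam e i x)
    - (eta * n)^-1 * ln (mu_v lam i x * \prod_(e' in Nb i) S lam e' i x) * d.
  rewrite (eq_bigr (fun e => lam e i x + eta^-1 * ln (S lam e i x) - (eta * n)^-1
     * ln (mu_v lam i x * \prod_(e' in Nb i) S lam e' i x))); last first.
    by move=> e eN; rewrite /smp_update eqxx eN.
  by rewrite sumrB big_split /= -mulr_sumr sumr_const -mulr_natr.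
set Z := \sum_y wv lam i y.
have Z_gt0 : 0 < Z by exact: Zv_gt0.
have wv_ln : - eta * Cv i x + eta * \sum_(e in Nb i) lam e i x =
    ln Z + ln (mu_v lam i x).
  rewrite -lnM ?posrE ?mu_v_gt0 // /Defs.mu_v [Z * _]mulrC divfK ?lt0r_neq0 //.
  by rewrite /Defs.wv expRK.
rewrite {1}/Defs.wv upd_sum /smp_mean /geomean ln_mu_prodS -/n.
rewrite -[Z]lnK ?posrE // -expRD; congr expR.
set l := ln (mu_v lam i x); set ls := \sum_(e in Nb i) ln (S lam e i x).
have -> : - eta * Cv i x = ln Z + l - eta * \sum_(e in Nb i) lam e i x.
  by rewrite -/l -wv_ln; ring.
by rewrite nE; field; rewrite -nE pnatr_eq0 eta_neq0.
Qed.

Lemma we_upd_out lam i e xe : e \notin Nb i -> we (upd lam i) e xe = we lam e xe.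
Proof.
move=> eN; rewrite /Defs.we; congr (expR (_ - _ * _)).
by apply: eq_bigr => j _; rewrite /smp_update (negbTE eN) andbF.
Qed.

Lemma we_upd_in lam i e xe : e \in Nb i ->
  we (upd lam i) e xe = we lam e xe *
    (smp_mean lam i (Defs.proj e xe i) / S lam e i (Defs.proj e xe i)).
Proof.
move=> eN; have ei : in_edge e i by move: eN; rewrite inE => /andP[].
rewrite /Defs.we (bigD1 i ei) /= (bigD1 i ei) /=.
have others : \sum_(j | in_edge e j && (j != i)) upd lam i e j (Defs.proj e xe j)
    = \sum_(j | in_edge e j && (j != i)) lam e j (Defs.proj e xe j).
  by apply: eq_bigr => j /andP[_ ji]; rewrite /smp_update (negbTE ji).
rewrite others /smp_update eqxx eN /=.
set x := Defs.proj e xe i.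
have S_inv : (S lam e i x)^-1 = expR (- ln (S lam e i x)).
  by rewrite expRN lnK // posrE S_gt0.
rewrite S_inv /smp_mean /geomean ln_mu_prodS -!expRD; congr expR.
by field; rewrite addrC natr1 pnatr_eq0 eta_neq0.
Qed.

Lemma Ze_upd lam i e : e \in Nb i ->
  \sum_xe we (upd lam i) e xe = (\sum_xe we lam e xe) * \sum_x smp_mean lam i x.
Proof.
move=> eN; rewrite (eq_bigr _ (fun xe _ => we_upd_in lam xe eN)).
set Z := \sum_xe we lam e xe.
have we_mu xe : we lam e xe = Z * mu_e lam e xe.
  by rewrite /Defs.mu_e mulrC divfK // lt0r_neq0 // Ze_gt0.
under eq_bigr => xe _ do rewrite we_mu -mulrA.
rewrite -mulr_sumr; congr (_ * _).
rewrite (partition_big (fun xe => Defs.proj e xe i) xpredT) //=; apply: eq_bigr => x _.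
under eq_bigr => xe /eqP -> do [].
by rewrite -mulr_suml mulrC divfK // lt0r_neq0 // S_gt0.
Qed.

Lemma L_upd lam i :
  L (upd lam i) = L lam + eta^-1 * (deg i).+1%:R * ln (\sum_x smp_mean lam i x).
Proof.
set lnG := ln (\sum_x smp_mean lam i x).
have vertices : \sum_j ln (\sum_x wv (upd lam i) j x)
    = \sum_j ln (\sum_x wv lam j x) + lnG.
  rewrite (bigD1 i) //= [X in _ = X + _](bigD1 i) //=.
  under eq_bigr => x _ do rewrite wv_upd_self.
  rewrite -mulr_sumr lnM ?posrE ?Zv_gt0 ?smp_mean_sum_gt0 // addrAC.
  by congr (_ + _ + _); apply: eq_bigr => j ji; under eq_bigr do rewrite wv_upd_other //.
have edges : \sum_(e in E) ln (\sum_xe we (upd lam i) e xe)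
    = \sum_(e in E) ln (\sum_xe we lam e xe) + lnG * (deg i)%:R.
  rewrite (eq_bigr (fun e => ln (\sum_xe we lam e xe) +
      (if e \in Nb i then lnG else 0))); last first.
    move=> e eE; case: ifP => eN.
      by rewrite Ze_upd // lnM ?posrE ?Ze_gt0 ?smp_mean_sum_gt0.
    by rewrite addr0; under eq_bigr do rewrite we_upd_out ?eN //.
  rewrite big_split /=; congr (_ + _).
  rewrite -big_mkcondr (eq_bigl (fun e => e \in Nb i)) => [|e].
    by rewrite sumr_const mulr_natr.
  by rewrite /= [e \in Nb i]inE andbA andbb.
by rewrite /Defs.L vertices edges -natr1; ring.
Qed.

(* One SMP update at i pays for the slack at i: combine the key estimate with
   the exact decrease of L and ln y <= y - 1. *)
Lemma vertex_slack_le lam i :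
  \sum_(e in Nb i) (\sum_x `|slack lam e i x|) ^+ 2 <=
  4 * eta * (deg i).+1%:R * (L lam - L (upd lam i)).
Proof.
have key := sum_l1_dev_le (A := Nb i) (mu_v_gt0 lam i)
  (fun e x => S_gt0 lam e i x) (mu_v_sum lam i) (fun e _ => S_sum lam e i).
rewrite /Defs.slack; apply: (le_trans key); rewrite L_upd.
have := ln_le_subr1 (smp_mean_sum_gt0 lam i).
set n : R := (deg i).+1%:R; set SG := \sum_x _ => ln_le.
have -> : 4 * eta * n * (L lam - (L lam + eta^-1 * n * ln SG)) = 4 * n ^+ 2 * (- ln SG).
  by field; exact: eta_neq0.
by rewrite ler_pM2l ?mulr_gt0 ?exprn_gt0 ?ltr0n //; lra.
Qed.

Hypothesis deg_gt0 : forall i, (0 < deg i)%N.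
Let N : nat := (\sum_j deg j)%N.
Let p i : R := (deg i)%:R / N%:R.

Lemma N_p i : N%:R * p i = (deg i)%:R.
Proof.
have deg_le : (deg i <= N)%N by rewrite /N (bigD1 i) //= leq_addr.
by rewrite /p mulrC divfK // pnatr_eq0 -lt0n (leq_trans (deg_gt0 i)).
Qed.

Lemma p_ge0 i : 0 <= p i.
Proof. by rewrite divr_ge0 ?ler0n. Qed.

Lemma p_sum (v0 : V) : \sum_i p i = 1.
Proof.
have N_gt0 : (0 < N)%N by rewrite /N (bigD1 v0) //= ltn_addr.
by rewrite -mulr_suml -natr_sum divff // pnatr_eq0 -lt0n.
Qed.

Lemma obj_le_expected_decrease lam :
  obj lam <= 8 * N%:R * eta * (L lam - \sum_i p i * L (upd lam i)).
Proof.
have -> : 8 * N%:R * eta * (L lam - \sum_i p i * L (upd lam i)) =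
    \sum_i 8 * eta * (deg i)%:R * (L lam - L (upd lam i)).
  rewrite mulrBr; under [in RHS]eq_bigr do rewrite mulrBr.
  rewrite sumrB -mulr_suml -mulr_sumr -natr_sum -/N mulr_sumr; congr (_ - _).
    by ring.
  by apply: eq_bigr => i _; rewrite -(N_p i); ring.
rewrite obj_by_vertex; apply: ler_sum => i _.
have slack_le := vertex_slack_le lam i.
have decrease_ge0 : 0 <= L lam - L (upd lam i).
  rewrite -(@pmulr_rge0 _ (4 * eta * (deg i).+1%:R)) ?mulr_gt0 ?ltr0n //.
  by apply: le_trans slack_le; rewrite sumr_ge0 // => e _; exact: sqr_ge0.
apply: (le_trans slack_le); rewrite ler_wpM2r // -natr1.
have : 1 <= (deg i)%:R :> R by rewrite ler1n.
have := eta_gt0; nra.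
Qed.

(* L is bounded below: every partition function dominates the weight of the
   constant labelling x0, at which the dual variables cancel out. *)
Lemma L_lower_bound lam :
  - \sum_i Cv i x0 - \sum_(e in E) Ce e (x0, x0) <= L lam.
Proof.
have vertex i : eta * (- Cv i x0 + \sum_(e in Nb i) lam e i x0) <=
    ln (\sum_x wv lam i x).
  have -> : eta * (- Cv i x0 + \sum_(e in Nb i) lam e i x0) = ln (wv lam i x0).
    by rewrite /Defs.wv expRK; ring.
  rewrite ler_ln ?posrE ?Zv_gt0 ?expR_gt0 // (bigD1 x0) //= lerDl.
  by rewrite sumr_ge0 // => x _; exact: expR_ge0.
have edge e : eta * (- Ce e (x0, x0) - \sum_(j | in_edge e j) lam e j x0) <=
    ln (\sum_xe we lam e xe).
  have -> : eta * (- Ce e (x0, x0) - \sum_(j | in_edge e j) lam e j x0) =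
      ln (we lam e (x0, x0)).
    by rewrite /Defs.we expRK; under [in RHS]eq_bigr do rewrite proj_diag; ring.
  rewrite ler_ln ?posrE ?Ze_gt0 ?expR_gt0 // (bigD1 (x0, x0)) //= lerDl.
  by rewrite sumr_ge0 // => xe _; exact: expR_ge0.
have eta_inv_ge0 : 0 <= eta^-1 by rewrite invr_ge0 ltW.
have vertices : eta^-1 * \sum_i eta * (- Cv i x0 + \sum_(e in Nb i) lam e i x0)
    <= eta^-1 * \sum_i ln (\sum_x wv lam i x).
  by rewrite ler_wpM2l // ler_sum.
have edges : eta^-1 * \sum_(e in E)
      eta * (- Ce e (x0, x0) - \sum_(j | in_edge e j) lam e j x0)
    <= eta^-1 * \sum_(e in E) ln (\sum_xe we lam e xe).
  by rewrite ler_wpM2l // ler_sum.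
apply: le_trans (lerD vertices edges).
rewrite -!mulr_sumr !mulKf ?eta_neq0 // big_split /= sumrB /= sumrN.
by rewrite sum_incidences sumrN; lra.
Qed.

(* The main estimate, for a nonempty graph (v0 is any vertex). *)
Lemma expected_obj_le (v0 : V) (K : nat) : (0 < K)%N ->
  expected_output_obj E Cv Ce eta K p <=
  8 * N%:R * eta * (L (@lam0 R V X) - inf [set L lam | lam in setT]) / K%:R.
Proof.
move=> K_gt0; set Linf := inf _.
have Linf_le lam : Linf <= L lam.
  apply: ge_inf; last by exists lam.
  exists (- \sum_i Cv i x0 - \sum_(e in E) Ce e (x0, x0)) => _ [lam' _ <-].
  exact: L_lower_bound.
have output_le (s : K.-tuple V) : obj (output E Cv Ce eta s) <=
    K%:R^-1 * \sum_(k < K) obj (foldl upd (@lam0 R V X) (take k s)).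
  exact: (arg_min_le_mean (fun k => obj (iterate E Cv Ce eta s k)) K_gt0).
have last_ge :
    Linf <= \sum_(s : K.-tuple V) seq_weight p s * L (foldl upd (@lam0 R V X) s).
  apply: (@le_trans _ _ (\sum_(s : K.-tuple V) seq_weight p s * Linf)).
    by rewrite -mulr_suml (seq_weight_sum (p_sum v0)) mul1r.
  by apply: ler_sum => s _; rewrite ler_wpM2l // seq_weight_ge0 //; exact: p_ge0.
have descent := expected_descent p_ge0 (p_sum v0) obj_le_expected_decrease
  K (@lam0 R V X).
rewrite mulrC; apply: (@le_trans _ _ (K%:R^-1 * \sum_(s : K.-tuple V)
    seq_weight p s * \sum_(k < K) obj (foldl upd (@lam0 R V X) (take k s)))).
  rewrite mulr_sumr; apply: ler_sum => s _.
  by rewrite mulrCA ler_wpM2l ?output_le ?seq_weight_ge0 //; exact: p_ge0.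
rewrite ler_wpM2l ?invr_ge0 ?ler0n //; apply: (le_trans descent).
by rewrite ler_wpM2l ?lerB // !mulr_ge0 ?ler0n // ltW.
Qed.

End SMPDescent.

Unset Implicit Arguments.

Theorem lemma10 (R : realType) (V X : finType) (E : {set V * V})
  (Cv : V -> X -> R) (Ce : V * V -> X * X -> R) (eta : R) (K : nat) :
  (forall e, e \in E -> e.1 != e.2) ->
  (forall e, e \in E -> (e.2, e.1) \notin E) ->
  (forall i : V, (0 < deg E i)%N) ->
  (2 <= #|X|)%N ->
  0 < eta ->
  (1 <= K)%N ->
  let N := (\sum_(j : V) deg E j)%N in
  expected_output_obj E Cv Ce eta K (fun i => (deg E i)%:R / N%:R)
  <= 8 * N%:R * eta
     * (L E Cv Ce eta (@lam0 R V X) - inf [set L E Cv Ce eta lam | lam in setT])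
     / K%:R.
Proof.
move=> _ _ deg_gt0 X_ge2 eta_gt0 K_gt0; cbv zeta.
have [x0 _] : exists x0 : X, x0 \in X by apply/card_gt0P; exact: leq_trans X_ge2.
have [v0 _ | V_empty] := pickP V.
  exact: (expected_obj_le Cv Ce eta_gt0 x0 deg_gt0 v0 K_gt0).
(* Without vertices there are no vertex sequences of positive length. *)
rewrite /expected_output_obj big1 => [|s _]; last by have := V_empty (tnth s (Ordinal K_gt0)).
by rewrite big1 ?mulr0 ?mul0r // => j; have := V_empty j.
Qed.
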